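(* Let $V$ be a module over a commutative ring $k$, let $[\cdot,\cdot]:V\times V\to V$ be a bilinear map such that $(V,[\cdot,\cdot])$ is a Lie algebra (i.e. $[x,x]=0$ and $\circlearrowleft_{x,y,z}[x,[y,z]]=0$ for all $x,y,z\in V$), and let $\alpha:V\to V$ be a linear map. Then: (1) if $(V,[\cdot,\cdot],\alpha)$ is a Hom-Lie algebra of type $I_2$, it is also a Hom-Lie algebra of type $I_1$; (2) if $(V,[\cdot,\cdot],\alpha)$ is a Hom-Lie algebra of type $II_2$, it is also a Hom-Lie algebra of type $II_1$.
   Context: For $x,y,z\in V$, $\circlearrowleft_{x,y,z} F(x,y,z)$ denotes $F(x,y,z)+F(y,z,x)+F(z,x,y)$. A triple $(V,[\cdot,\cdot],\alpha)$ with $V$ a $k$-module, $[\cdot,\cdot]$ bilinear with $[x,x]=0$ for all $x$, and $\alpha$ linear, is a Hom-Lie algebra of a given type if the corresponding identity holds for all $x,y,z\in V$: type $I_1$: $\circlearrowleft_{x,y,z}[\alpha(x),[y,z]]=0$; type $I_2$: $\circlearrowleft_{x,y,z}[x,[\alpha(y),z]]=0$; type $I_3$: $\circlearrowleft_{x,y,z}[x,[y,\alpha(z)]]=0$; type $II$: $\circlearrowleft_{x,y,z}[x,\alpha([y,z])]=0$; type $II_1$: $\circlearrowleft_{x,y,z}[x,[\alpha(y),\alpha(z)]]=0$; type $II_2$: $\circlearrowleft_{x,y,z}[\alpha(x),[y,\alpha(z)]]=0$; type $II_3$: $\circlearrowleft_{x,y,z}[\alpha(x),[\alpha(y),z]]=0$.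 *)

From HB Require Import structures.
From mathcomp Require Import all_boot all_order all_algebra.
From mathcomp Require Import sesquilinear.
Set Implicit Arguments. Unset Strict Implicit. Unset Printing Implicit Defensive.
Import GRing.Theory.
Local Open Scope ring_scope.

Definition cyc {V : zmodType} (F : V -> V -> V -> V) (x y z : V) : V :=
  F x y z + F y z x + F z x y.

Section HomLie.
Variables (R : comNzRingType) (V : lmodType R).
Variables (br : V -> V -> V) (al : V -> V).

Definition alternating := forall x : V, br x x = 0.
Definition jacobi := forall x y z : V, cyc (fun a b c => br a (br b c)) x y z = 0.
Definition homLie_I1 := forall x y z : V, cyc (fun a b c => br (al a) (br b c)) x y z = 0.
Definition homLie_I2 := forall x y z : V, cyc (fun a b c => br a (br (al b) c)) x y z = 0.
Definition homLie_II1 := forall x y z : V, cyc (fun a b c => br a (br (al b) (al c))) x y z = 0.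
Definition homLie_II2 := forall x y z : V, cyc (fun a b c => br (al a) (br b (al c))) x y z = 0.
End HomLie.

From HB Require Import structures.
From mathcomp Require Import all_boot all_order all_algebra.
From mathcomp Require Import sesquilinear ssrAC.
Local Open Scope ring_scope.
Import GRing.Theory.

(* In a Lie algebra the Jacobi
   identity, rewritten with antisymmetry, is the Leibniz rule
       [u,[v,w]] = [v,[u,w]] - [w,[u,v]].
   Applying it with u = alpha x (resp. u = x, v = alpha y, w = alpha z)
   expresses the summand T(x,y,z) of the target identity (type I_1, resp.
   II_1) as F(y,x,z) - F(z,x,y), where F is the summand of the hypothesis
   (type I_2, resp. II_2).  A purely additive lemma then shows that the
   cyclic sum of such a T is the difference of two cyclic sums of F, hence
   vanishes when all cyclic sums of F do. *)

Lemma cyc_transpose (V : zmodType) (F T : V -> V -> V -> V) :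
  (forall a b c, T a b c = F b a c - F c a b) ->
  (forall x y z, cyc F x y z = 0) -> forall x y z, cyc T x y z = 0.
Proof.
move=> defT cycF0 x y z.
have -> : cyc T x y z = cyc F y x z - cyc F x y z.
  by rewrite /cyc !defT opprD !opprD (AC (2*2*2)%AC ((1*5*3)*(4*6*2))%AC).
by rewrite !cycF0 subrr.
Qed.

Section LieAlgebra.
Variables (R : comNzRingType) (V : lmodType R) (br : {bilinear V -> V -> V}).
Hypotheses (br_alt : alternating br) (br_jacobi : jacobi br).

(* An alternating bilinear bracket is antisymmetric: expand [x+y, x+y] = 0. *)
Lemma br_anti (x y : V) : br x y = - br y x.
Proof.
apply/eqP; rewrite -subr_eq0 opprK.
have := br_alt (x + y).
by rewrite linearDl !linearDr /= !br_alt add0r addr0 => ->.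
Qed.

Lemma br_leibniz (u v w : V) : br u (br v w) = br v (br u w) - br w (br u v).
Proof.
have := br_jacobi u v w; rewrite /cyc [br w u]br_anti linearNr /=.
by rewrite addrAC => /eqP; rewrite subr_eq0 => /eqP <-; rewrite addrK.
Qed.

End LieAlgebra.

Theorem proposition1p1 (R : comNzRingType) (V : lmodType R)
  (br : {bilinear V -> V -> V}) (al : {linear V -> V}) :
  alternating br -> jacobi br ->
  (homLie_I2 br al -> homLie_I1 br al) /\
  (homLie_II2 br al -> homLie_II1 br al).
Proof.
move=> br_alt br_jacobi.
(* Type I:  [alpha x,[y,z]]       = [y,[alpha x,z]] - [z,[alpha x,y]];
   type II: [x,[alpha y,alpha z]] = [alpha y,[x,alpha z]] - [alpha z,[x,alpha y]]. *)
split=> hyp; apply: cyc_transpose hyp => a b c; exact: br_leibniz.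
Qed.
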